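(* Let $C\subseteq\{0,1\}^n$ be a maximum class with corner-peeling ordering $v_1,\dots,v_{|C|}$, and let $r(v_t)$ be the set of colors of the edges incident to $v_t$ in $\Gamma(C_{t-1})$ (the corner-peeling unlabeled compression scheme). Orient each edge of $\Gamma(C)$ of color $i$ away from its endpoint $u$ with $i\in r(u)$. Then the resulting directed graph has no directed cycle, i.e., every corner-peeling unlabeled compression scheme is acyclic.
   Context: For $C\subseteq\{0,1\}^n$, $C$ is maximum if $|C|=\sum_{i=0}^{\mathrm{VC}(C)}\binom{n}{i}$, where $\mathrm{VC}(C)$ is the VC-dimension. The one-inclusion graph $\Gamma(C)$ has vertex set $C$, with an edge between vertices differing in exactly one coordinate, colored by that coordinate. A $k$-cube in $C$ is a set of $2^k$ points of $C$ agreeing outside some $k$ coordinates and taking all values on them. A corner-peeling ordering is an ordering $v_1,\dots,v_{|C|}$ of $C$ such that, with $C_0=C$ and $C_t=C_{t-1}\setminus\{v_t\}$, for each $t$ there is a unique cube $C'_{t-1}$ of maximum dimension among cubes in $C_{t-1}$ containing $v_t$, and all neighbours of $v_t$ in $\Gamma(C_{t-1})$ lie in $C'_{t-1}$. *)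

From mathcomp Require Import all_boot.
Set Implicit Arguments. Unset Strict Implicit. Unset Printing Implicit Defensive.

Section Defs.
Variable n : nat.

Definition pt := {ffun 'I_n -> bool}.

Definition shattered (C : {set pt}) (S : {set 'I_n}) : bool :=
  [forall g : pt, [exists c in C, [forall i in S, c i == g i]]].

Definition VCdim (C : {set pt}) : nat :=
  \max_(S : {set 'I_n} | shattered C S) #|S|.

Definition maximum (C : {set pt}) : bool :=
  #|C| == \sum_(i < (VCdim C).+1) 'C(n, i).

(* x and y form an edge of the one-inclusion graph of colour i *)
Definition edge_col (x y : pt) (i : 'I_n) : bool :=
  [set j | x j != y j] == [set i].

Definition subcube (x : pt) (K : {set 'I_n}) : {set pt} :=
  [set y : pt | [forall i in ~: K, y i == x i]].

Definition is_cube (D Q : {set pt}) (K : {set 'I_n}) : bool :=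
  (Q \subset D) && [exists x : pt, Q == subcube x K].

Definition corner_step (D : {set pt}) (v : pt) : Prop :=
  exists (Q : {set pt}) (K : {set 'I_n}),
    [/\ is_cube D Q K, v \in Q,
        (forall Q' K', is_cube D Q' K' -> v \in Q' ->
           #|K'| <= #|K| /\ (#|K'| = #|K| -> Q' = Q))
      & (forall w i, w \in D -> edge_col v w i -> w \in Q)].

Definition remaining (C : {set pt}) (s : seq pt) (t : nat) : {set pt} :=
  C :\: [set x in take t s].

Definition pt0 : pt := [ffun => false].

Definition corner_peeling (C : {set pt}) (s : seq pt) : Prop :=
  perm_eq s (enum C) /\
  forall t, t < size s -> corner_step (remaining C s t) (nth pt0 s t).

Definition rcols (D : {set pt}) (v : pt) : {set 'I_n} :=
  [set i | [exists w in D, edge_col v w i]].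

(* r(u) for u = v_t : computed in C_{t-1} *)
Definition r_of (C : {set pt}) (s : seq pt) (u : pt) : {set 'I_n} :=
  rcols (remaining C s (index u s)) u.

Definition orient_arc (C : {set pt}) (s : seq pt) (u w : pt) : bool :=
  [&& u \in C, w \in C & [exists i, edge_col u w i && (i \in r_of C s u)]].

End Defs.

From mathcomp Require Import all_boot.

Set Implicit Arguments.
Unset Strict Implicit.
Unset Printing Implicit Defensive.

(* [i \in r(u)] means that the neighbour of [u] of colour [i] was still
   present when [u] was peeled, so every arc points from a vertex to a later
   one in the peeling ordering and the position in the ordering strictly
   increases along directed paths. *)

Lemma edge_col_irrefl n (u : pt n) i : ~~ edge_col u u i.
Proof.
apply/negP => /eqP Huu.
have : i \in [set j | u j != u j] by rewrite Huu set11.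
by rewrite inE eqxx.
Qed.

Lemma edge_col_inj n (u w w' : pt n) i :
  edge_col u w i -> edge_col u w' i -> w = w'.
Proof.
move=> /eqP Hw /eqP Hw'; apply/ffunP => j.
have : (j \in [set j | u j != w j]) = (j \in [set i]) by rewrite Hw.
have : (j \in [set j | u j != w' j]) = (j \in [set i]) by rewrite Hw'.
rewrite !inE.
by case: (u j); case: (w j); case: (w' j); case: (j == i).
Qed.

Lemma homo_ltn_acyclic (T : Type) (e : rel T) (f : T -> nat) :
  {homo f : a b / e a b >-> a < b} -> forall x p, ~~ cycle e (x :: p).
Proof.
move=> f_mono x p; apply/negP => /= /(@sub_path _ _ (relpre f ltn) f_mono).
rewrite -path_map => /(order_path_min ltn_trans).
by rewrite map_rcons all_rcons ltnn.
Qed.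

Lemma orient_arc_index_lt n (C : {set pt n}) s u w :
  perm_eq s (enum C) -> orient_arc C s u w -> index u s < index w s.
Proof.
move=> sC /and3P[uC wC /existsP[i /andP[uw]]].
rewrite inE => /existsP[w' /andP[w_left uw']].
rewrite (edge_col_inj uw' uw) {w' uw'} in w_left.
have [us ws] : u \in s /\ w \in s by rewrite !(perm_mem sC) !mem_enum.
move: w_left; rewrite /remaining !inE in_take // -leqNgt => /andP[le_uw _].
rewrite ltn_neqAle le_uw andbT; apply: contraTneq uw.
by move=> /(index_inj u us ws) ->; apply: edge_col_irrefl.
Qed.

Theorem proposition1 (n : nat) (C : {set pt n}) (s : seq (pt n)) :
  maximum C -> corner_peeling C s ->
  forall (x : pt n) (p : seq (pt n)), ~~ cycle (orient_arc C s) (x :: p).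
Proof.
move=> _ [sC _]; apply: (@homo_ltn_acyclic _ _ (index^~ s)).
by move=> u w; apply: orient_arc_index_lt.
Qed.
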